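(* Let $G$ be a finite group and $T$ a $G$-transfer system. Two subgroups are in the same connected component of $T$ if and only if they are in the same connected component of $\mathrm{Hull}(T)$. Moreover, if $K\le H$ and $K$ and $H$ lie in the same connected component of $T$, then $\mathrm{Hull}(T)$ contains the edge $K\to H$.
   Context: A $G$-transfer system is a partial order $\to$ on the set of subgroups of $G$ such that: $K\to H$ implies $K\le H$; $H\to H$ for all $H$; $L\to K$ and $K\to H$ imply $L\to H$; $K\to H$ implies $K\cap L\to H\cap L$ for every $L\le G$; $K\to H$ implies $gKg^{-1}\to gHg^{-1}$ for all $g\in G$. We view $T$ as a directed graph on the subgroups of $G$; two subgroups are in the same connected component if joined by a path in the underlying undirected graph. A $G$-transfer system is saturated if whenever $L\le K\le H$ and $L\to H$ is in it, then $K\to H$ is in it. The saturated hull $\mathrm{Hull}(T)$ is the smallest saturated $G$-transfer system containing $T$. *)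

From mathcomp Require Import all_boot all_fingroup.
From Stdlib Require Import Relations.Relation_Operators.
Set Implicit Arguments. Unset Strict Implicit. Unset Printing Implicit Defensive.
Local Open Scope group_scope.

Definition trel (gT : finGroupType) := {group gT} -> {group gT} -> Prop.

Definition transfer_system (gT : finGroupType) (G : {group gT}) (T : trel gT) : Prop :=
  [/\ (forall K H : {group gT}, T K H -> K \subset H /\ H \subset G),
      (forall H : {group gT}, H \subset G -> T H H),
      (forall L K H : {group gT}, T L K -> T K H -> T L H),
      (forall K H L : {group gT}, T K H -> L \subset G ->
          T (K :&: L)%G (H :&: L)%G)
    & (forall (K H : {group gT}) (g : gT), T K H -> g \in G ->
          T (K :^ g)%G (H :^ g)%G)].

Definition saturated (gT : finGroupType) (T : trel gT) : Prop :=
  forall L K H : {group gT}, L \subset K -> K \subset H -> T L H -> T K H.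

Definition hull (gT : finGroupType) (G : {group gT}) (T : trel gT) : trel gT :=
  fun K H => forall S : trel gT, transfer_system G S -> saturated S ->
    (forall A B, T A B -> S A B) -> S K H.

Definition same_component (gT : finGroupType) (T : trel gT) : trel gT :=
  clos_refl_sym_trans {group gT} T.

(* Restricting along H sends a connected component of T into a connected
   component, and one edge K -> K' of T gives K ∩ H -> K' ∩ H.  In a saturated
   transfer system S containing T, this edge together with saturation shows that
   S (K ∩ H) H holds iff S (K' ∩ H) H does; so this property is constant on
   components of T, and taking K := H gives S (K ∩ H) H, i.e. K -> H, for every
   K ≤ H in the component of H.  Conversely, "K ≤ H and K, H in the same
   T-component" is itself a saturated transfer system containing T, so the hull
   adds no edge between different components. *)
From mathcomp Require Import all_boot all_fingroup.
From Stdlib Require Import Relations.Relation_Operators.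
Set Implicit Arguments. Unset Strict Implicit. Unset Printing Implicit Defensive.
Local Open Scope group_scope.

Lemma same_component_lift (gT : finGroupType) (T U : trel gT)
    (f : {group gT} -> {group gT}) :
  (forall X Y, T X Y -> same_component U (f X) (f Y)) ->
  forall X Y, same_component T X Y -> same_component U (f X) (f Y).
Proof.
move=> hTU X Y; elim=> {X Y}.
- exact: hTU.
- by move=> X; apply: rst_refl.
- by move=> X Y _ IH; apply: rst_sym.
- by move=> X Y Z _ IH1 _ IH2; apply: rst_trans IH2.
Qed.

Lemma same_component_sub (gT : finGroupType) (T U : trel gT) :
  (forall X Y, T X Y -> U X Y) ->
  forall X Y, same_component T X Y -> same_component U X Y.
Proof.
by move=> hTU; apply: (same_component_lift (f := id)) => X Y /hTU; apply: rst_step.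
Qed.

Lemma setI_groupIl (gT : finGroupType) (K H : {group gT}) :
  K \subset H -> (K :&: H)%G = K.
Proof. by move=> sKH; apply/val_inj/setIidPl. Qed.

Lemma setI_groupIr (gT : finGroupType) (K H : {group gT}) :
  H \subset K -> (K :&: H)%G = H.
Proof. by move=> sHK; apply/val_inj/setIidPr. Qed.

Lemma sub_hull (gT : finGroupType) (G : {group gT}) (T : trel gT) X Y :
  T X Y -> hull G T X Y.
Proof. by move=> hXY S _ _; apply. Qed.

Section TransferSystem.

Variables (gT : finGroupType) (G : {group gT}) (T : trel gT).
Hypothesis hT : transfer_system G T.

Lemma transfer_sub X Y : T X Y -> X \subset Y /\ Y \subset G.
Proof. by case: hT => hsub _ _ _ _; apply: hsub. Qed.

Lemma same_component_setI (X Y L : {group gT}) : L \subset G ->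
  same_component T X Y -> same_component T (X :&: L)%G (Y :&: L)%G.
Proof.
case: hT => _ _ _ hres _ sLG.
by apply: (same_component_lift (f := fun X => (X :&: L)%G)) => X' Y' /hres-/(_ L sLG);
  apply: rst_step.
Qed.

Lemma same_component_conj (X Y : {group gT}) g : g \in G ->
  same_component T X Y -> same_component T (X :^ g)%G (Y :^ g)%G.
Proof.
case: hT => _ _ _ _ hconj Gg.
by apply: (same_component_lift (f := fun X => (X :^ g)%G)) => X' Y' /hconj-/(_ g Gg);
  apply: rst_step.
Qed.

Definition component_order : trel gT := fun K H =>
  [/\ K \subset H, H \subset G & same_component T K H].

Lemma component_order_transfer_system : transfer_system G component_order.
Proof.
split.
- by move=> K H [].
- by move=> H sHG; split=> //; apply: rst_refl.
- move=> L K H [sLK _ cLK] [sKH sHG cKH]; split=> //.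
  + exact: subset_trans sKH.
  + exact: rst_trans cKH.
- move=> K H L [sKH sHG cKH] sLG; split.
  + exact: setSI.
  + exact: subset_trans (subsetIr _ _) sLG.
  + exact: same_component_setI.
- move=> K H g [sKH sHG cKH] Gg; split.
  + by rewrite conjSg.
  + by rewrite -(conjGid Gg) conjSg.
  + exact: same_component_conj.
Qed.

Lemma component_order_saturated : saturated component_order.
Proof.
move=> L K H sLK sKH [_ sHG cLH]; split=> //.
have cLK : same_component T L K.
  have := same_component_setI (subset_trans sKH sHG) cLH.
  by rewrite (setI_groupIl sLK) (setI_groupIr sKH).
by apply: rst_trans cLH; apply: rst_sym.
Qed.

Lemma sub_component_order X Y : T X Y -> component_order X Y.
Proof. by move=> hXY; have [sXY sYG] := transfer_sub hXY; split=> //; apply: rst_step. Qed.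

Lemma hull_sub_component_order X Y : hull G T X Y -> component_order X Y.
Proof.
by apply; [exact: component_order_transfer_system
          | exact: component_order_saturated | exact: sub_component_order].
Qed.

Lemma saturated_setI_component (S : trel gT) :
  transfer_system G S -> saturated S -> (forall A B, T A B -> S A B) ->
  forall (H X Y : {group gT}), H \subset G -> same_component T X Y ->
  S (X :&: H)%G H <-> S (Y :&: H)%G H.
Proof.
move=> [_ _ trS _ _] satS sTS H X Y sHG.
elim=> {X Y}.
- move=> X Y hXY; have [sXY _] := transfer_sub hXY.
  have eXY : S (X :&: H)%G (Y :&: H)%G by case: hT => _ _ _ hres _; apply/sTS/hres.
  split=> [sXH | sYH]; last exact: trS eXY sYH.
  by apply: satS sXH; [exact: setSI | exact: subsetIr].
- by [].
- by move=> X Y _ IH; split=> /IH.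
- by move=> X Y Z _ IH1 _ IH2; split=> [/IH1/IH2 | /IH2/IH1].
Qed.

Lemma hull_component_edge (K H : {group gT}) : H \subset G -> K \subset H ->
  same_component T K H -> hull G T K H.
Proof.
move=> sHG sKH cKH S hS satS sTS.
have := saturated_setI_component hS satS sTS sHG cKH.
rewrite (setI_groupIl sKH) (setI_groupIl (subxx H)); case: hS => _ reflS _ _ _ [_]; apply.
exact: reflS.
Qed.

End TransferSystem.

Theorem mainTheorem2 (gT : finGroupType) (G : {group gT}) (T : trel gT)
  (hT : transfer_system G T) :
  (forall K H : {group gT}, K \subset G -> H \subset G ->
     (same_component T K H <-> same_component (hull G T) K H)) /\
  (forall K H : {group gT}, K \subset G -> H \subset G -> K \subset H ->
     same_component T K H -> hull G T K H).
Proof.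
split=> [K H _ _ | K H _ sHG sKH]; last exact: hull_component_edge.
split; first by apply: same_component_sub => X Y /sub_hull.
apply: (same_component_lift (f := id)) => X Y /(hull_sub_component_order hT).
by case.
Qed.
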